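(* Let $\Omega\subset\mathbb{R}^d$ be a connected, bounded open domain and let $n\ge 1$. Let $\mathbf{r}=(\mathbf{r}_1,\ldots,\mathbf{r}_n)\in\Upsilon$, where $\mathbf{r}_i=(b_i,\boldsymbol{\omega}_i)$ with $b_i\in\mathbb{R}$, $\boldsymbol{\omega}_i\in\mathcal{S}^{d-1}$ and $\mathcal{P}_i(\mathbf{r}_i)\cap\Omega\neq\emptyset$ for each $i$. Assume the hyperplanes $\mathcal{P}_1(\mathbf{r}_1),\ldots,\mathcal{P}_n(\mathbf{r}_n)$ are pairwise distinct. Then the functions $\sigma_0,\sigma_1,\ldots,\sigma_n$ are linearly independent as functions on $\Omega$.
   Context: $\sigma(t)=\max\{0,t\}$ is the ReLU function. $\mathcal{S}^{d-1}$ is the unit sphere in $\mathbb{R}^d$. For $\mathbf{x}\in\mathbb{R}^d$ write $\mathbf{y}=(1,x_1,\ldots,x_d)^T$. For $\mathbf{r}_i=(b_i,\boldsymbol{\omega}_i)\in\mathbb{R}^{d+1}$, the breaking hyperplane is $\mathcal{P}_i(\mathbf{r}_i)=\{\mathbf{x}\in\Omega:\boldsymbol{\omega}_i\cdot\mathbf{x}+b_i=0\}$ (hyperplanes are compared as hyperplanes $\{\mathbf{x}\in\mathbb{R}^d:\boldsymbol{\omega}_i\cdot\mathbf{x}+b_i=0\}$). The admissible set is $\Upsilon=\{\mathbf{r}=(\mathbf{r}_1,\ldots,\mathbf{r}_n): \mathbf{r}_i=(b_i,\boldsymbol{\omega}_i),\ b_i\in\mathbb{R},\ \boldsymbol{\omega}_i\in\mathcal{S}^{d-1},\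 \mathcal{P}_i(\mathbf{r}_i)\cap\Omega\neq\emptyset\}$. Define $\sigma_0(\mathbf{x})=1$ and $\sigma_i(\mathbf{x})=\sigma(\mathbf{r}_i\cdot\mathbf{y})=\sigma(\boldsymbol{\omega}_i\cdot\mathbf{x}+b_i)$ for $i=1,\ldots,n$. *)

From HB Require Import structures.
From mathcomp Require Import all_boot all_order all_algebra.
From mathcomp Require Import all_classical all_reals all_analysis.
Set Implicit Arguments. Unset Strict Implicit. Unset Printing Implicit Defensive.
Import Order.TTheory GRing.Theory Num.Theory.
Import numFieldNormedType.Exports.
Local Open Scope ring_scope.
Local Open Scope classical_set_scope.

Definition dotv {R : realType} {d : nat} (u v : 'rV[R]_d) : R :=
  \sum_(j < d) u ord0 j * v ord0 j.

Definition unit_sphere {R : realType} (d : nat) : set 'rV[R]_d :=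
  [set w | dotv w w = 1].

Definition relu {R : realType} (t : R) : R := Num.max 0 t.

Definition hyperplane {R : realType} {d : nat} (b : R) (w : 'rV[R]_d)
  : set 'rV[R]_d := [set x | dotv w x + b = 0].

(* sigma_i(x) = relu (w_i . x + b_i) *)
Definition neuron {R : realType} {d : nat} (b : R) (w : 'rV[R]_d)
  (x : 'rV[R]_d) : R := relu (dotv w x + b).

From HB Require Import structures.
From mathcomp Require Import all_boot all_order all_algebra.
From mathcomp Require Import all_classical all_reals all_analysis.
From mathcomp Require Import lra ring.

(* Near a point p of the hyperplane P_i lying on no other P_j, every sigma_j with
   j <> i is affine, while sigma_i restricted to the line p + t w_i is relu t.  A
   vanishing combination therefore gives c_0' + c_i relu t + beta t = 0 for small t,
   which forces c_i = 0; then c_0 = 0.  Such a point exists in every open set meeting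
   P_i: along the polynomial curve t |-> q + sum_k t^(k+1) (e_k - (w_i)_k w_i), which
   stays in P_i, each affine function w_j . x + b_j is a polynomial in t that vanishes
   identically only if P_j = P_i, so it has finitely many zeros. *)

Set Implicit Arguments.
Unset Strict Implicit.
Unset Printing Implicit Defensive.

Import Order.TTheory GRing.Theory Num.Theory.
Import numFieldNormedType.Exports.
Local Open Scope ring_scope.
Local Open Scope classical_set_scope.

Section DotProduct.
Variables (R : realType) (d : nat).
Implicit Types (u v x y : 'rV[R]_d) (a : R).

Lemma dotvC u v : dotv u v = dotv v u.
Proof. by apply: eq_bigr => j _; rewrite mulrC. Qed.

Lemma dotvDr u x y : dotv u (x + y) = dotv u x + dotv u y.
Proof. by rewrite /dotv -big_split; apply: eq_bigr => j _; rewrite mxE mulrDr. Qed.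

Lemma dotvBr u x y : dotv u (x - y) = dotv u x - dotv u y.
Proof. by rewrite /dotv -sumrB; apply: eq_bigr => j _; rewrite !mxE mulrBr. Qed.

Lemma dotvZr u a x : dotv u (a *: x) = a * dotv u x.
Proof. by rewrite /dotv mulr_sumr; apply: eq_bigr => j _; rewrite mxE mulrCA. Qed.

Lemma dotvZl u a x : dotv (a *: u) x = a * dotv u x.
Proof. by rewrite dotvC dotvZr dotvC. Qed.

Lemma dotv_sumr u (F : 'I_d -> 'rV[R]_d) :
  dotv u (\sum_(k < d) F k) = \sum_(k < d) dotv u (F k).
Proof.
rewrite /dotv; under eq_bigr do rewrite summxE mulr_sumr.
by rewrite exchange_big.
Qed.

Lemma dotv_delta u (k : 'I_d) : dotv u (delta_mx 0 k) = u 0 k.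
Proof.
rewrite /dotv (bigD1 k) //= big1 => [|j jk]; first by rewrite mxE !eqxx mulr1 addr0.
by rewrite mxE eq_sym (negbTE jk) andbF mulr0.
Qed.

Lemma hyperplaneZ a b u : a != 0 -> hyperplane (a * b) (a *: u) = hyperplane b u.
Proof.
move=> a0; apply/funext => x; rewrite /hyperplane /=; apply/propext.
rewrite dotvZl -mulrDr; split => [/eqP|->]; last by rewrite mulr0.
by rewrite mulf_eq0 (negbTE a0) => /eqP.
Qed.

End DotProduct.

Lemma exists_nonroot_in_itv (R : numFieldType) (P : {poly R}) (e : R) :
  P != 0 -> 0 < e -> exists2 t, 0 < t < e & ~~ root P t.
Proof.
move=> P0 e0; pose ts := mkseq (fun k => e / k.+2%:R) (size P).
have ts_uniq : uniq ts.
  apply: mkseq_uniq => k l /(mulfI (lt0r_neq0 e0))/invr_inj/eqP.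
  by rewrite eqr_nat !eqSS => /eqP.
have /allPn [_ /mapP [k _ ->] Pk] : ~~ all (root P) ts.
  apply/negP => /(max_poly_roots P0)/(_ ts_uniq).
  by rewrite size_mkseq ltnn.
exists (e / k.+2%:R) => //; rewrite divr_gt0 ?ltr0n //=.
by rewrite ltr_pdivrMr ?ltr0n // ltr_pMr // ltr1n.
Qed.

Section MomentCurve.
Variables (R : realType) (d : nat).
Implicit Types (u v q : 'rV[R]_d) (b c t : R).

(* For a unit vector [u] the vectors [delta_mx 0 k - u 0 k *: u] span the
   orthogonal complement of [u]; the distinct powers of [t] keep their
   contributions independent. *)
Definition moment_curve u q t : 'rV[R]_d :=
  q + \sum_(k < d) t ^+ k.+1 *: (delta_mx 0 k - u 0 k *: u).

Lemma dotv_moment_curve v u q t : dotv v (moment_curve u q t) =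
  dotv v q + \sum_(k < d) t ^+ k.+1 * (v 0 k - u 0 k * dotv v u).
Proof.
rewrite dotvDr dotv_sumr; congr (_ + _); apply: eq_bigr => k _.
by rewrite dotvZr dotvBr dotv_delta dotvZr.
Qed.

Lemma moment_curve_hyperplane b u q t : dotv u u = 1 ->
  hyperplane b u q -> hyperplane b u (moment_curve u q t).
Proof.
rewrite /hyperplane /= => uu qH; rewrite dotv_moment_curve uu addrAC qH add0r.
by rewrite big1 // => k _; rewrite mulr1 subrr mulr0.
Qed.

Lemma moment_curve_cvg u q : moment_curve u q t @[t --> 0] --> q.
Proof.
rewrite -[X in _ --> X](_ : moment_curve u q 0 = q); last first.
  by rewrite /moment_curve big1 ?addr0 // => k _; rewrite expr0n scale0r.
apply: cvgD; first exact: cvg_cst.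
apply: cvg_big => [|k _]; first exact: add_continuous.
by apply: cvgZ; [exact: exprn_continuous | exact: cvg_cst].
Qed.

Definition trace_poly v c u q : {poly R} :=
  (dotv v q + c)%:P + \sum_(k < d) (v 0 k - u 0 k * dotv v u) *: 'X^(k.+1).

Lemma horner_trace_poly v c u q t :
  (trace_poly v c u q).[t] = dotv v (moment_curve u q t) + c.
Proof.
rewrite dotv_moment_curve hornerD hornerC horner_sum [RHS]addrAC.
by congr (_ + _); apply: eq_bigr => k _; rewrite hornerZ hornerXn mulrC.
Qed.

Lemma trace_poly_eq0 v c u q : trace_poly v c u q = 0 ->
  dotv v q + c = 0 /\ v = dotv v u *: u.
Proof.
move=> P0; split.
  have := congr1 (fun P : {poly R} => P`_0) P0.
  rewrite coefD coefC /= coef_sum big1 ?addr0 ?coef0 // => k _.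
  by rewrite coefZ coefXn /= mulr0.
apply/rowP => k; rewrite mxE.
have := congr1 (fun P : {poly R} => P`_k.+1) P0.
rewrite coefD coefC /= coef_sum (bigD1 k) //= big1 => [|l lk]; last first.
  rewrite coefZ coefXn eqSS.
  have -> : (k == l :> nat) = false by apply/negbTE; rewrite eq_sym.
  by rewrite mulr0.
rewrite coefZ coefXn eqxx mulr1 add0r addr0 coef0 => /eqP.
by rewrite subr_eq0 => /eqP ->; rewrite mulrC.
Qed.

Lemma trace_poly_neq0 v c u q b : v != 0 -> dotv u u = 1 ->
  hyperplane b u q -> hyperplane c v <> hyperplane b u ->
  trace_poly v c u q != 0.
Proof.
move=> v0 uu qH Hcv; apply/eqP => /trace_poly_eq0 [vq vu].
set a := dotv v u in vu; have a0 : a != 0.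
  by apply: contraNneq v0 => a0; rewrite vu a0 scale0r.
have ca : c = a * b by move: qH vq; rewrite /hyperplane /= vu dotvZl; nra.
by apply: Hcv; rewrite vu ca hyperplaneZ.
Qed.

Lemma exists_point_off_hyperplanes (n : nat) (Omega : set 'rV[R]_d)
    (b : 'I_n -> R) (w : 'I_n -> 'rV[R]_d) (i : 'I_n) q :
  open Omega -> Omega q -> hyperplane (b i) (w i) q -> dotv (w i) (w i) = 1 ->
  (forall j, j != i -> w j != 0) ->
  (forall j, j != i -> hyperplane (b j) (w j) <> hyperplane (b i) (w i)) ->
  exists2 p, (Omega `&` hyperplane (b i) (w i)) p &
    forall j, j != i -> dotv (w j) p + b j != 0.
Proof.
move=> Oopen Oq qH uu w_neq0 distinct.
pose P := \prod_(j | j != i) trace_poly (w j) (b j) (w i) q.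
have P0 : P != 0.
  apply/prodf_neq0 => j ji.
  exact: trace_poly_neq0 (w_neq0 j ji) uu qH (distinct j ji).
have /(iffLR (nbhs_ballP _ _)) [e /= e0 He] :
    \forall t \near 0, Omega (moment_curve (w i) q t).
  by apply: moment_curve_cvg; exact: Oopen.
have [t /andP [t0 te] Pt] := exists_nonroot_in_itv P0 e0.
exists (moment_curve (w i) q t).
  split; last exact: moment_curve_hyperplane.
  by apply: He; rewrite -ball_normE /= sub0r normrN gtr0_norm.
move=> j ji; move: Pt; rewrite /root horner_prod => /prodf_neq0/(_ j ji).
by rewrite horner_trace_poly.
Qed.

End MomentCurve.

Section ReLU.
Variable R : realType.

Lemma relu_affine_near (a s : R) : a != 0 ->
  \forall t \near 0, relu (a + t * s) = relu a + t * (if 0 < a then s else 0).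
Proof.
move=> a_neq0; have norm_a_gt0 : 0 < `|a| by rewrite normr_gt0.
apply/nbhs_ballP; exists (`|a| / (`|s| + 1)) => /=.
  by rewrite divr_gt0 // ltr_wpDl.
move=> t; rewrite -ball_normE /= sub0r normrN => ht.
have /ltr_normlP [lo hi] : `|t * s| < `|a|.
  rewrite normrM (le_lt_trans (y := `|t| * (`|s| + 1))) ?ler_wpM2l ?lerDl //.
  by rewrite -ltr_pdivlMr ?ltr_wpDl.
have [a_lt0|a_gt0|a_eq0] := ltgtP a 0; last by rewrite a_eq0 eqxx in a_neq0.
- rewrite (ltr0_norm a_lt0) in hi.
  rewrite mulr0 addr0 /relu !max_l //; lra.
- rewrite (gtr0_norm a_gt0) in lo.
  rewrite /relu !max_r //; lra.
Qed.

Lemma relu_coef_eq0 (a0 a1 a2 : R) :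
  (\forall t \near 0, a0 + a1 * relu t + a2 * t = 0) -> a1 = 0.
Proof.
move=> /(iffLR (nbhs_ballP _ _)) [e /= e0 He].
have e2_gt0 : 0 < e / 2 by rewrite divr_gt0.
have e2_ge0 : 0 <= e / 2 := ltW e2_gt0.
have Ne2_le0 : - (e / 2) <= 0 by rewrite oppr_le0.
have small (t : R) : `|t| <= e / 2 -> a0 + a1 * relu t + a2 * t = 0.
  move=> te; apply: He; rewrite -ball_normE /= sub0r normrN (le_lt_trans te) //.
  by rewrite ltr_pdivrMr // ltr_pMr // ltr1n.
move: (small 0) (small (e / 2)) (small (- (e / 2))).
rewrite normr0 normrN gtr0_norm // e2_ge0 lexx /relu maxxx (max_r e2_ge0).
rewrite (max_l Ne2_le0) => /(_ isT) h0 /(_ isT) h1 /(_ isT) h2.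
have : a1 * (e / 2) = 0 by lra.
by move/eqP; rewrite mulf_eq0 (gt_eqF e2_gt0) orbF => /eqP.
Qed.

End ReLU.

Lemma coef_eq0_at_kink (R : realType) (d n : nat) (Omega : set 'rV[R]_d)
    (b : 'I_n -> R) (w : 'I_n -> 'rV[R]_d) (c0 : R) (c : 'I_n -> R)
    (i : 'I_n) (p : 'rV[R]_d) :
  dotv (w i) (w i) = 1 -> nbhs p Omega -> hyperplane (b i) (w i) p ->
  (forall j, j != i -> dotv (w j) p + b j != 0) ->
  (forall x, Omega x -> c0 + \sum_(j < n) c j * neuron (b j) (w j) x = 0) ->
  c i = 0.
Proof.
move=> uu Op pH p_off vanish.
pose a j := dotv (w j) p + b j.
pose s j := if 0 < a j then dotv (w j) (w i) else 0.
have line_in : \forall t \near 0, Omega (p + t *: w i).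
  have : (fun t : R => p + t *: w i) @ (0 : R) --> p.
    rewrite -[X in _ --> X]addr0 -(scale0r (w i)).
    apply: cvgD; first exact: cvg_cst.
    by apply: cvgZ; [exact: cvg_id | exact: cvg_cst].
  exact.
have neuron_i t : neuron (b i) (w i) (p + t *: w i) = relu t.
  by rewrite /neuron dotvDr dotvZr uu mulr1 addrAC pH add0r.
have neuron_j : \forall t \near 0, forall j, j != i ->
    neuron (b j) (w j) (p + t *: w i) = relu (a j) + t * s j.
  apply: (@filter_forall _ _ (fun j t => j != i ->
    neuron (b j) (w j) (p + t *: w i) = relu (a j) + t * s j) (nbhs (0 : R)) _) => j.
  have [->|ji] := eqVneq j i.
    by apply: nearW => t /negP.
  apply: filterS (relu_affine_near (dotv (w j) (w i)) (p_off j ji)) => t ht _.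
  by rewrite /neuron dotvDr dotvZr addrAC; exact: ht.
apply: (@relu_coef_eq0 _ (c0 + \sum_(j < n | j != i) c j * relu (a j))
  _ (\sum_(j < n | j != i) c j * s j)).
near=> t.
have Ot : Omega (p + t *: w i) by near: t.
have Nt : forall j, j != i ->
    neuron (b j) (w j) (p + t *: w i) = relu (a j) + t * s j by near: t.
have := vanish _ Ot; rewrite (bigD1 i) //= neuron_i.
rewrite (eq_bigr (fun j => c j * relu (a j) + t * (c j * s j))) => [|j ji].
  by rewrite big_split /= -mulr_sumr => h; rewrite -[RHS]h; ring.
by rewrite Nt // mulrDr mulrCA.
Unshelve. all: by end_near.
Qed.

Lemma unit_sphere_neq0 (R : realType) (d : nat) (w : 'rV[R]_d) :
  @unit_sphere R d w -> w != 0.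
Proof.
apply: contraPneq => ->; rewrite /unit_sphere /= /dotv big1 => [|j _].
  by move/esym/eqP; rewrite oner_eq0.
by rewrite mxE mul0r.
Qed.

Unset Implicit Arguments.

Theorem lemma2p1 (R : realType) (d n : nat) (Omega : set 'rV[R]_d)
  (b : 'I_n -> R) (w : 'I_n -> 'rV[R]_d) :
  open Omega -> bounded_set Omega -> connected Omega ->
  (0 < n)%N ->
  (forall i, @unit_sphere R d (w i)) ->
  (forall i, hyperplane (b i) (w i) `&` Omega !=set0) ->
  (forall i j, i != j -> hyperplane (b i) (w i) <> hyperplane (b j) (w j)) ->
  forall (c0 : R) (c : 'I_n -> R),
    (forall x, Omega x -> c0 + \sum_(i < n) c i * neuron (b i) (w i) x = 0) ->
    c0 = 0 /\ (forall i, c i = 0).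
Proof.
move=> Oopen _ _ n_gt0 unit meets distinct c0 c vanish.
have c_eq0 i : c i = 0.
  have [q [qH Oq]] := meets i.
  have [p [Op pH] p_off] := exists_point_off_hyperplanes Oopen Oq qH (unit i)
    (fun j _ => unit_sphere_neq0 (unit j)) (fun j ji => distinct j i ji).
  exact: coef_eq0_at_kink (unit i) (Oopen p Op) pH p_off vanish.
split=> //; have [q [_ Oq]] := meets (Ordinal n_gt0).
by have := vanish q Oq; rewrite big1 ?addr0 // => i _; rewrite c_eq0 mul0r.
Qed.
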